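(* Let $A(z,\lambda)=\sum_{i\ge0}A_i(z)\lambda^i\in\mathfrak{gl}_2(\mathbb{C}((z))[[\lambda]])$ and $R(z,\lambda)\in\mathrm{GL}_2(\mathbb{C}((z))[[\lambda]])$ satisfy: (1) $A(z,\lambda)$ is diagonal; (2) $R(z,0)\in\mathfrak{gl}_2(\mathbb{C}[[z]])$; (3) $\det R(z,0)\in\mathbb{C}[[z]]$ has a first-order zero at $z=0$; (4) $\tilde A:=R^{-1}AR+\lambda R^{-1}\frac{dR}{dz}\in\mathfrak{gl}_2(\mathbb{C}[[z,\lambda]])$. Then $A_1(z)\in z^{-1}\mathfrak{gl}_2(\mathbb{C}[[z]])$. *)

(* Formal series are encoded by their coefficients:
   an element of gl_2(K((z))[[lambda]]) is a function
     a : nat -> int -> 'M[K]_2,   a i k = matrix coefficient of lambda^i z^k,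
   such that for every i the Laurent series a i is bounded below in z. *)
From HB Require Import structures.
From mathcomp Require Import all_boot all_order all_algebra.
From mathcomp Require Import complex Rstruct.
From Stdlib Require Import Reals ClassicalEpsilon.

Set Implicit Arguments. Unset Strict Implicit. Unset Printing Implicit Defensive.
Import Order.TTheory GRing.Theory Num.Theory.
Local Open Scope ring_scope.

Notation Cplx := (Rdefinitions.R[i]).

Section MxSeries.
Variable K : fieldType.

Definition mxser := nat -> int -> 'M[K]_2.

Definition laurent (a : mxser) : Prop :=
  forall i : nat, exists N : int, forall k : int, k < N -> a i k = 0.

(* a lies in gl_2(K[[z,lambda]]) *)
Definition powser (a : mxser) : Prop :=
  forall (i : nat) (k : int), k < 0 -> a i k = 0.

(* a chosen lower bound: a i k = 0 for k < - lb a i (meaningful when laurent a) *)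
Definition lb (a : mxser) (i : nat) : nat :=
  epsilon (inhabits 0%N)
    (fun N : nat => forall k : int, k < - (N%:Z) -> a i k = 0).

Definition mxser_add (a b : mxser) : mxser := fun i k => a i k + b i k.

Definition mxser_one : mxser :=
  fun i k => if (i == 0%N) && (k == 0) then 1%:M else 0.

(* Cauchy product in K((z))[[lambda]]: the inner sum runs over
   l = t - lb a j in [-lb a j, k + lb b (i-j)] (a superset of the support) *)
Definition mxser_mul (a b : mxser) : mxser := fun i k =>
  \sum_(j < i.+1)
    \sum_(t < (absz (k + (lb b (subn i j))%:Z + (lb a j)%:Z)).+1)
      a j (t%:Z - (lb a j)%:Z) *m b (subn i j) (k - (t%:Z - (lb a j)%:Z)).

Definition mxser_dz (a : mxser) : mxser :=
  fun i k => (k + 1)%:~R *: a i (k + 1).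

Definition mxser_lam (a : mxser) : mxser :=
  fun i k => if i is i'.+1 then a i' k else 0.

Definition i0 : 'I_2 := @Ordinal 2 0 isT.
Definition i1 : 'I_2 := @Ordinal 2 1 isT.

(* coefficient of z^m in det R(z,0), for R(z,0) a power series matrix *)
Definition det0_coef (r : mxser) (m : nat) : K :=
  \sum_(l < m.+1)
    (r 0%N l%:Z i0 i0 * r 0%N (subn m l)%:Z i1 i1
     - r 0%N l%:Z i0 i1 * r 0%N (subn m l)%:Z i1 i0).

(* R^{-1} A R + lambda R^{-1} dR/dz, with S = R^{-1} *)
Definition gauge (A R S : mxser) : mxser :=
  mxser_add (mxser_mul (mxser_mul S A) R) (mxser_lam (mxser_mul S (mxser_dz R))).

End MxSeries.

(* Write R_i, S_i, A_i for the lambda^i-coefficients, so that R_0 S_0 = 1 and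
   R_0 S_1 = - R_1 S_0.  The lambda^1-coefficient G_1 of the gauge transform satisfies
     R_0 G_1 S_0 = A_1 + (A_0 X - X A_0) + R_0' S_0,    X = R_1 S_0.
   Since det R_0 has a simple zero, S_0 = R_0^-1 has at most a simple pole: if s is
   its lowest coefficient and s' the next one, then R_0 S_0 = 1 gives
   R_0(0) s = 0 and R_0(0) s' + R_0(1) s = 0, and multiplying by adjugates turns
   this into (det R_0)'(0) s = 0.  So R_0 G_1 S_0 and R_0' S_0 have no terms below
   z^-1, the commutator with the diagonal A_0 has zero diagonal, and A_1 is
   diagonal. *)

From HB Require Import structures.
From mathcomp Require Import all_boot all_order all_algebra.
From mathcomp Require Import complex Rstruct.
From Stdlib Require Import Reals.
From mathcomp Require Import zify ring.
From Stdlib Require Import ClassicalEpsilon FunctionalExtensionality.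
Import Order.TTheory GRing.Theory Num.Theory.
Set Implicit Arguments. Unset Strict Implicit. Unset Printing Implicit Defensive.
Local Open Scope ring_scope.

Section LaurentSeries.
Variable T : nzRingType.
Implicit Types (f g h : int -> T) (F G H : nat -> T).

Definition vanish_below (m : int) f := forall k, k < m -> f k = 0.

Definition lower_bounded f := exists m, vanish_below m f.

Definition lbound f : nat :=
  epsilon (inhabits 0%nat) (fun N : nat => forall k : int, k < - (N%:Z) -> f k = 0).

(* The window is the one of [mxser_mul], whose lambda-coefficients are thus
   [lmul] products by computation. *)
Definition lmul f g : int -> T := fun k =>
  \sum_(t < (absz (k + (lbound g)%:Z + (lbound f)%:Z)).+1)
    f (t%:Z - (lbound f)%:Z) * g (k - (t%:Z - (lbound f)%:Z)).

Definition lone : int -> T := fun k => if k == 0 then 1 else 0.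

Definition zshift (m : int) f : nat -> T := fun t => f (t%:Z + m).

Definition cauchy F G (n : nat) : T := \sum_(t < n.+1) F t * G (n - t)%nat.

Lemma exists_nat_add (m k : int) : m <= k -> exists n : nat, k = n%:Z + m.
Proof. by move=> le_mk; exists (absz (k - m)); lia. Qed.

Lemma exists_nat_gt (m k : int) : exists n : nat, k < m + n%:Z.
Proof. by exists (absz (k - m)).+1; lia. Qed.

Lemma lboundP f : lower_bounded f -> vanish_below (- (lbound f)%:Z) f.
Proof.
move=> [m fm]; apply: (epsilon_spec (inhabits 0%nat)
  (fun N : nat => forall k : int, k < - (N%:Z) -> f k = 0)).
by exists (absz (- m)) => k lt_k; apply: fm; lia.
Qed.

Lemma common_lower_bound f g : lower_bounded f -> lower_bounded g ->
  exists m, vanish_below m f /\ vanish_below m g.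
Proof.
move=> [m1 fm1] [m2 gm2]; exists (Num.min m1 m2).
by split=> k lt_k; [apply: fm1 | apply: gm2]; move: lt_k; rewrite lt_min => /andP[].
Qed.

Lemma window_sum_extend (F : int -> T) m n j :
  (forall u, m + n%:Z <= u -> F u = 0) ->
  \sum_(t < n + j) F (t%:Z + m) = \sum_(t < n) F (t%:Z + m).
Proof.
move=> Fn; rewrite big_split_ord /= [X in _ + X]big1 ?addr0 // => t _.
by apply: Fn; lia.
Qed.

Lemma window_sum_shift (F : int -> T) m n j :
  (forall u, u < m + j%:Z -> F u = 0) ->
  \sum_(t < j + n) F (t%:Z + m) = \sum_(t < n) F (t%:Z + (m + j%:Z)).
Proof.
move=> Fj; rewrite big_split_ord /= big1 ?add0r => [|t _]; last first.
  by apply: Fj; have := ltn_ord t; lia.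
by apply: eq_bigr => t _; congr F; lia.
Qed.

Lemma window_sumE (F : int -> T) m n m' n' :
  vanish_below m F -> vanish_below m' F ->
  (forall u, m + n%:Z <= u -> F u = 0) -> (forall u, m' + n'%:Z <= u -> F u = 0) ->
  \sum_(t < n) F (t%:Z + m) = \sum_(t < n') F (t%:Z + m').
Proof.
wlog le_mm' : m n m' n' / m <= m'.
  move=> wlog_le Fm Fm' Fn Fn'; case: (lerP m m') => [le|/ltW le]; first exact: wlog_le.
  by symmetry; apply: wlog_le.
move=> Fm Fm' Fn Fn'; pose j := absz (m' - m).
have m'E : m' = m + j%:Z by rewrite /j; lia.
rewrite -(window_sum_extend j Fn) addnC window_sum_shift -?m'E //.
have Fn'' u : m' + n%:Z <= u -> F u = 0 by move=> le_u; apply: Fn; lia.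
by rewrite -(window_sum_extend n' Fn'') addnC window_sum_extend.
Qed.

Lemma lmul_window f g m1 m2 n k : vanish_below m1 f -> vanish_below m2 g ->
  k < m1 + m2 + n%:Z -> lmul f g k = \sum_(t < n) f (t%:Z + m1) * g (k - (t%:Z + m1)).
Proof.
move=> fm1 gm2 lt_k.
have fN := lboundP (ex_intro _ m1 fm1); have gN := lboundP (ex_intro _ m2 gm2).
apply: (window_sumE (F := fun u => f u * g (k - u))) => u u_out.
- by rewrite fN ?mul0r.
- by rewrite fm1 ?mul0r.
- by rewrite gN ?mulr0 //; lia.
- by rewrite gm2 ?mulr0 //; lia.
Qed.

Lemma vanish_below_lmul f g m1 m2 : vanish_below m1 f -> vanish_below m2 g ->
  vanish_below (m1 + m2) (lmul f g).
Proof.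
by move=> fm1 gm2 k lt_k; rewrite (lmul_window (n := 0) fm1 gm2) ?big_ord0 ?addr0.
Qed.

Lemma lower_bounded_lmul f g : lower_bounded f -> lower_bounded g ->
  lower_bounded (lmul f g).
Proof. by move=> [m1 fm1] [m2 gm2]; exists (m1 + m2); apply: vanish_below_lmul. Qed.

Lemma lmul_cauchy f g m1 m2 (n : nat) : vanish_below m1 f -> vanish_below m2 g ->
  lmul f g (n%:Z + m1 + m2) = cauchy (zshift m1 f) (zshift m2 g) n.
Proof.
move=> fm1 gm2; rewrite (lmul_window (n := n.+1) fm1 gm2); last by lia.
apply: eq_bigr => t _; rewrite /zshift; congr (_ * g _).
by have := ltn_ord t; lia.
Qed.

Lemma zshift_lmul f g m1 m2 : vanish_below m1 f -> vanish_below m2 g ->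
  zshift (m1 + m2) (lmul f g) = cauchy (zshift m1 f) (zshift m2 g).
Proof.
move=> fm1 gm2; apply: functional_extensionality => n.
by rewrite /zshift addrA lmul_cauchy.
Qed.

Lemma cauchy_coef_poly F G (n m : nat) : (m <= n)%nat ->
  cauchy F G m = ((\poly_(i < n.+1) F i) * \poly_(i < n.+1) G i)`_m.
Proof.
move=> le_mn; rewrite coefM; apply: eq_bigr => i _.
by rewrite !coef_poly !ifT //; have := ltn_ord i; lia.
Qed.

Lemma cauchyA F G H n : cauchy F (cauchy G H) n = cauchy (cauchy F G) H n.
Proof.
pose P E := \poly_(i < n.+1) E i : {poly T}.
have coefP E i : (i < n.+1)%nat -> (P E)`_i = E i.
  by move=> lt_i; rewrite coef_poly lt_i.
transitivity ((P F * (P G * P H))`_n); last rewrite mulrA.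
all: rewrite coefM; apply: eq_bigr => i _; have lt_i := ltn_ord i.
- by rewrite coefP // /P -cauchy_coef_poly ?leq_subr.
- by rewrite coefP ?ltnS ?leq_subr // /P -cauchy_coef_poly // -ltnS.
Qed.

Lemma cauchy_rev F G n : cauchy F G n = \sum_(t < n.+1) F (n - t)%nat * G t.
Proof.
rewrite /cauchy (reindex_inj rev_ord_inj); apply: eq_bigr => t _ /=.
by rewrite subSS subKn // -ltnS.
Qed.

Lemma lmulA f g h : lower_bounded f -> lower_bounded g -> lower_bounded h ->
  lmul f (lmul g h) = lmul (lmul f g) h.
Proof.
move=> [m1 fm1] [m2 gm2] [m3 hm3]; apply: functional_extensionality => k.
have fgm := vanish_below_lmul fm1 gm2; have ghm := vanish_below_lmul gm2 hm3.
have [lt_k|le_k] := ltP k (m1 + m2 + m3).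
  by rewrite (vanish_below_lmul fm1 ghm) ?(vanish_below_lmul fgm hm3) // addrA.
have [n ->] := exists_nat_add le_k.
have -> : n%:Z + (m1 + m2 + m3) = n%:Z + m1 + (m2 + m3) by lia.
rewrite lmul_cauchy // zshift_lmul // cauchyA -zshift_lmul // -lmul_cauchy //.
by rewrite -!addrA.
Qed.

Lemma vanish_below_add m f g : vanish_below m f -> vanish_below m g ->
  vanish_below m (f \+ g).
Proof. by move=> fm gm k lt_k /=; rewrite fm ?gm ?addr0. Qed.

Lemma vanish_below_opp m f : vanish_below m f -> vanish_below m (\- f).
Proof. by move=> fm k lt_k /=; rewrite fm ?oppr0. Qed.

Lemma vanish_below_one : vanish_below 0 lone.
Proof. by move=> k lt_k; rewrite /lone lt_eqF. Qed.

Lemma lower_bounded_add f g : lower_bounded f -> lower_bounded g ->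
  lower_bounded (f \+ g).
Proof.
move=> bf bg; have [m [fm gm]] := common_lower_bound bf bg.
by exists m; apply: vanish_below_add.
Qed.

Lemma lmulDl f g h : lower_bounded f -> lower_bounded g -> lower_bounded h ->
  lmul (f \+ g) h = lmul f h \+ lmul g h.
Proof.
move=> bf bg [m2 hm2]; have [m1 [fm1 gm1]] := common_lower_bound bf bg.
apply: functional_extensionality => k; have [n lt_k] := exists_nat_gt (m1 + m2) k.
rewrite /= (lmul_window (vanish_below_add fm1 gm1) hm2 lt_k).
rewrite (lmul_window fm1 hm2 lt_k) (lmul_window gm1 hm2 lt_k) -big_split.
by apply: eq_bigr => t _; rewrite mulrDl.
Qed.

Lemma lmulDr f g h : lower_bounded f -> lower_bounded g -> lower_bounded h ->
  lmul f (g \+ h) = lmul f g \+ lmul f h.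
Proof.
move=> [m1 fm1] bg bh; have [m2 [gm2 hm2]] := common_lower_bound bg bh.
apply: functional_extensionality => k; have [n lt_k] := exists_nat_gt (m1 + m2) k.
rewrite /= (lmul_window fm1 (vanish_below_add gm2 hm2) lt_k).
rewrite (lmul_window fm1 gm2 lt_k) (lmul_window fm1 hm2 lt_k) -big_split.
by apply: eq_bigr => t _; rewrite mulrDr.
Qed.

Lemma lmulNl f g : lower_bounded f -> lower_bounded g -> lmul (\- f) g = \- lmul f g.
Proof.
move=> [m1 fm1] [m2 gm2]; apply: functional_extensionality => k.
have [n lt_k] := exists_nat_gt (m1 + m2) k.
rewrite /= (lmul_window (vanish_below_opp fm1) gm2 lt_k) (lmul_window fm1 gm2 lt_k).
by rewrite -sumrN; apply: eq_bigr => t _; rewrite mulNr.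
Qed.

Lemma lmul1l f : lower_bounded f -> lmul lone f = f.
Proof.
move=> [m fm]; apply: functional_extensionality => k.
have [lt_k|le_k] := ltP k m.
  by rewrite fm // (vanish_below_lmul vanish_below_one fm) ?add0r.
have [n ->] := exists_nat_add le_k.
rewrite -[n%:Z]addr0 lmul_cauchy //; last exact: vanish_below_one.
rewrite /cauchy big_ord_recl big1 => [|t _]; last by rewrite /zshift /lone addr0 mul0r.
by rewrite /zshift /lone /= !addr0 mul1r subn0.
Qed.

Lemma lmul1r f : lower_bounded f -> lmul f lone = f.
Proof.
move=> [m fm]; apply: functional_extensionality => k.
have [lt_k|le_k] := ltP k m.
  by rewrite fm // (vanish_below_lmul fm vanish_below_one) ?addr0.
have [n ->] := exists_nat_add le_k.
rewrite -[n%:Z + m]addr0 lmul_cauchy //; last exact: vanish_below_one.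
rewrite /cauchy big_ord_recr big1 => [|t _]; last first.
  by rewrite /zshift /lone addr0 /= ifF ?mulr0 //; have := ltn_ord t; lia.
by rewrite /zshift /lone /= subnn !addr0 add0r mulr1.
Qed.

Lemma lmul_lowest_coefs f g m : vanish_below 0 f -> vanish_below m g ->
  lmul f g m = f 0 * g m /\ lmul f g (m + 1) = f 0 * g (m + 1) + f 1 * g m.
Proof.
move=> f0 gm; have c0 := lmul_cauchy 0 f0 gm; have c1 := lmul_cauchy 1 f0 gm.
rewrite !add0r in c0; rewrite addr0 addrC in c1.
rewrite c0 c1 /cauchy /zshift !big_ord_recl !big_ord0 /= !addr0 !add0r.
by split=> //; rewrite subn0 [_ + m]addrC.
Qed.
End LaurentSeries.

#[local] Hint Resolve lower_bounded_lmul lower_bounded_add : lower_bounded.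
(* Lets [//] discharge the [lower_bounded] side conditions of the ring laws. *)
#[local] Hint Extern 0 (lower_bounded _) =>
  solve [auto 20 with nocore lower_bounded] : core.

Section GaugeConjugation.
Variable T : nzRingType.
Variables A0 A1 R0 R1 S0 S1 R0' : int -> T.
Hypotheses (bA0 : lower_bounded A0) (bA1 : lower_bounded A1).
Hypotheses (bR0 : lower_bounded R0) (bR1 : lower_bounded R1).
Hypotheses (bS0 : lower_bounded S0) (bS1 : lower_bounded S1) (bR0' : lower_bounded R0').
Hypothesis RS0 : lmul R0 S0 = lone T.
Hypothesis RS1 : lmul R0 S1 = \- lmul R1 S0.
#[local] Hint Resolve bA0 bA1 bR0 bR1 bS0 bS1 bR0' : lower_bounded.

Lemma lmulKl Y : lower_bounded Y -> lmul R0 (lmul S0 Y) = Y.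
Proof. by move=> bY; rewrite lmulA // RS0 lmul1l. Qed.

Lemma lmulKr Y : lower_bounded Y -> lmul (lmul Y R0) S0 = Y.
Proof. by move=> bY; rewrite -lmulA // RS0 lmul1r. Qed.

Lemma gauge1_conj :
  lmul (lmul R0 (lmul (lmul S0 A0) R1 \+ lmul (lmul S0 A1 \+ lmul S1 A0) R0
                  \+ lmul S0 R0')) S0
  = lmul A0 (lmul R1 S0) \+ (A1 \- lmul (lmul R1 S0) A0) \+ lmul R0' S0.
Proof.
rewrite !lmulDr // !lmulDl // lmulDr // lmulDl //.
rewrite -[lmul (lmul S0 A0) R1]lmulA // lmulKl // -lmulA //.
rewrite [lmul R0 (lmul (lmul S0 A1) R0)]lmulA // lmulKl // lmulKr //.
rewrite [lmul R0 (lmul (lmul S1 A0) R0)]lmulA // lmulKr //.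
rewrite [lmul R0 (lmul S1 A0)]lmulA // RS1 lmulNl //.
by rewrite lmulKl.
Qed.
End GaugeConjugation.

Section TwoByTwo.
Variable K : comNzRingType.
Implicit Types A B : 'M[K]_2.

Lemma det_mx22 A : \det A = A i0 i0 * A i1 i1 - A i0 i1 * A i1 i0.
Proof.
rewrite (expand_det_row _ i0) !big_ord_recl big_ord0 /cofactor !det_mx11 !mxE /=.
rewrite addr0 expr0 expr1 !mul1r mulN1r mulrN.
by congr (A _ _ * A _ _ - A _ _ * A _ _); apply: val_inj.
Qed.

Lemma adj_mx22D A B : \adj (A + B) = \adj A + \adj B.
Proof. by apply/matrixP => i j; rewrite !mxE /cofactor !det_mx11 !mxE mulrDr. Qed.

Lemma adj_mx22_polar A B :
  \adj A *m B + \adj B *m A = (\det (A + B) - \det A - \det B)%:M.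
Proof.
have := mul_adj_mx (A + B).
rewrite adj_mx22D mulmxDl !mulmxDr !mul_adj_mx !raddfB /= => <-.
by rewrite -(addrA (\det A)%:M) (addrC (\det A)%:M) addrK addrA addrK.
Qed.
End TwoByTwo.

Section InverseOrder.
Variable K : fieldType.

Lemma simple_det_zero_jet_eq0 (X Y S S' : 'M[K]_2) :
  \det X = 0 -> \det (X + Y) - \det X - \det Y != 0 ->
  X *m S = 0 -> X *m S' + Y *m S = 0 -> S = 0.
Proof.
move=> detX0 polar_neq0 XS0 XS'YS0; apply/eqP.
have := scaler_eq0 (\det (X + Y) - \det X - \det Y) S.
rewrite (negbTE polar_neq0) /= => <-.
(* d S = (adj X Y + adj Y X) S = - adj X X S' + adj Y (X S) = - det X S' = 0 *)
have YS : Y *m S = - (X *m S') by apply/eqP; rewrite -addr_eq0 addrC XS'YS0.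
rewrite -mul_scalar_mx -adj_mx22_polar mulmxDl -!mulmxA YS XS0 mulmx0 addr0.
by rewrite mulmxN mulmxA mul_adj_mx detX0 raddf0 mul0mx oppr0.
Qed.

Lemma inverse_order_ge (R S : int -> 'M[K]_2) :
  vanish_below 0 R -> lower_bounded S -> lmul R S = lone _ ->
  \det (R 0) = 0 -> \det (R 0 + R 1) - \det (R 0) - \det (R 1) != 0 ->
  vanish_below (-1) S.
Proof.
move=> Rpow [m Sm] RS detR0 polar_neq0.
suff Svan n : forall k, k < m + n%:Z -> k < -1 -> S k = 0.
  by move=> k lt_k; apply: (Svan (absz (k - m)).+1) => //; lia.
elim: n => [|n IHn] k lt_kn lt_k; first by apply: Sm; lia.
have [lt_k'|le_k] := ltP k (m + n%:Z); first exact: IHn.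
have Sk : vanish_below k S by move=> j lt_j; apply: IHn; lia.
have [RSk RSk1] := lmul_lowest_coefs Rpow Sk.
apply: (simple_det_zero_jet_eq0 (S' := S (k + 1)) detR0 polar_neq0); rewrite !mulmxE.
  by rewrite -RSk RS /lone lt_eqF //; lia.
by rewrite -RSk1 RS /lone lt_eqF //; lia.
Qed.
End InverseOrder.

Section DiagonalCommutator.
Variables (K : comNzRingType) (n : nat).
Implicit Types D P : 'M[K]_n.+1.

Lemma is_diag_mulmx_comm_entry D P i : is_diag_mx D -> (D *m P) i i = (P *m D) i i.
Proof.
move/is_diag_mxP => Ddiag; rewrite !mxE (bigD1 i) // [RHS](bigD1 i) //= mulrC.
by rewrite !big1 // => j ji; rewrite Ddiag ?(mulr0, mul0r) // eq_sym.
Qed.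

Lemma lmul_diag_comm_entry (D P : int -> 'M[K]_n.+1) k i :
  lower_bounded D -> lower_bounded P -> (forall j, is_diag_mx (D j)) ->
  lmul D P k i i = lmul P D k i i.
Proof.
move=> [m1 Dm1] [m2 Pm2] Ddiag.
have [lt_k|le_k] := ltP k (m1 + m2).
  by rewrite (vanish_below_lmul Dm1 Pm2) ?(vanish_below_lmul Pm2 Dm1) ?mxE ?(addrC m2).
have [l ->] := exists_nat_add le_k.
rewrite addrA lmul_cauchy // -addrA (addrC m1) addrA lmul_cauchy // cauchy_rev /cauchy.
rewrite !summxE; apply: eq_bigr => t _; rewrite -!mulmxE.
exact/is_diag_mulmx_comm_entry/Ddiag.
Qed.

Lemma diag_eq0_of_commutator (D X A : int -> 'M[K]_n.+1) k :
  lower_bounded D -> lower_bounded X ->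
  (forall j, is_diag_mx (D j)) -> is_diag_mx (A k) ->
  (lmul D X \+ (A \- lmul X D)) k = 0 -> A k = 0.
Proof.
move=> bD bX Ddiag Adiag /matrixP Ek; apply/matrixP => i j; rewrite mxE.
have [<-|ij] := eqVneq i j; last exact: (is_diag_mxP Adiag).
by move: (Ek i i); rewrite !mxE lmul_diag_comm_entry // addrCA subrr addr0.
Qed.
End DiagonalCommutator.

Section FormalSeries.
Variable K : fieldType.
Implicit Types a b r : mxser K.

Lemma laurent_lower_bounded a i : laurent a -> lower_bounded (a i).
Proof. by move=> /(_ i) [m am]; exists m. Qed.

Lemma mxser_mul0 a b : mxser_mul a b 0 = lmul (a 0%nat) (b 0%nat).
Proof. by apply: functional_extensionality => k; rewrite /mxser_mul big_ord1. Qed.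

Lemma mxser_mul1 a b :
  mxser_mul a b 1 = lmul (a 0%nat) (b 1%nat) \+ lmul (a 1%nat) (b 0%nat).
Proof.
by apply: functional_extensionality => k; rewrite /mxser_mul big_ord_recr big_ord1.
Qed.

Lemma mxser_inverse0 r s : mxser_mul r s = mxser_one K ->
  lmul (r 0%nat) (s 0%nat) = lone _.
Proof. by rewrite -mxser_mul0 => ->. Qed.

Lemma mxser_inverse1 r s : mxser_mul r s = mxser_one K ->
  lmul (r 0%nat) (s 1%nat) = \- lmul (r 1%nat) (s 0%nat).
Proof.
move=> /(congr1 (fun c => c 1%nat)); rewrite mxser_mul1 => rs1.
apply: functional_extensionality => k; apply/eqP; rewrite /= -addr_eq0.
by rewrite [_ + _](congr1 (fun c => c k) rs1).
Qed.

Lemma gauge1 A r s : gauge A r s 1 =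
  lmul (lmul (s 0%nat) (A 0%nat)) (r 1%nat)
  \+ lmul (lmul (s 0%nat) (A 1%nat) \+ lmul (s 1%nat) (A 0%nat)) (r 0%nat)
  \+ lmul (s 0%nat) (mxser_dz r 0).
Proof.
by rewrite /gauge /mxser_add /mxser_lam /= mxser_mul1 !mxser_mul0 mxser_mul1.
Qed.

Lemma vanish_below_dz r i : vanish_below 0 (r i) -> vanish_below 0 (mxser_dz r i).
Proof.
move=> r0 k lt_k; rewrite /mxser_dz.
have [->|k1] := eqVneq k (-1); first by rewrite scale0r.
by rewrite r0 ?scaler0 //; lia.
Qed.

Lemma det0_coef0 r : det0_coef r 0 = \det (r 0%nat 0).
Proof. by rewrite /det0_coef big_ord1 det_mx22. Qed.

Lemma det0_coef1 r : det0_coef r 1 =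
  \det (r 0%nat 0 + r 0%nat 1) - \det (r 0%nat 0) - \det (r 0%nat 1).
Proof. by rewrite /det0_coef big_ord_recr big_ord1 !det_mx22 !mxE /=; ring. Qed.
End FormalSeries.

Theorem lemma4p11 (A R S : mxser Cplx) :
  laurent A -> laurent R -> laurent S ->
  (* R in GL_2(C((z))[[lambda]]) with inverse S *)
  mxser_mul R S = mxser_one Cplx -> mxser_mul S R = mxser_one Cplx ->
  (* (1) A diagonal *)
  (forall (i : nat) (k : int), is_diag_mx (A i k)) ->
  (* (2) R(z,0) in gl_2(C[[z]]) *)
  (forall k : int, k < 0 -> R 0%N k = 0) ->
  (* (3) det R(z,0) has a first-order zero at z = 0 *)
  det0_coef R 0 = 0 -> det0_coef R 1 != 0 ->
  (* (4) R^{-1} A R + lambda R^{-1} dR/dz in gl_2(C[[z,lambda]]) *)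
  powser (gauge A R S) ->
  (* A_1 in z^{-1} gl_2(C[[z]]) *)
  forall k : int, k < -1 -> A 1%N k = 0.
Proof.
move=> lA lR lS RS _ Adiag R0pow detR0 detR1 Gpow k lt_k.
rewrite det0_coef0 in detR0; rewrite det0_coef1 in detR1.
have RS0 := mxser_inverse0 RS; have RS1 := mxser_inverse1 RS.
have S0ord : vanish_below (-1) (S 0%nat).
  exact: inverse_order_ge R0pow (laurent_lower_bounded 0 lS) RS0 detR0 detR1.
have G1pow : vanish_below 0 (gauge A R S 1) by move=> j; apply: Gpow.
have := gauge1_conj (laurent_lower_bounded 0 lA) (laurent_lower_bounded 1 lA)
  (laurent_lower_bounded 0 lR) (laurent_lower_bounded 1 lR)
  (laurent_lower_bounded 0 lS) (laurent_lower_bounded 1 lS)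
  (ex_intro _ 0 (vanish_below_dz R0pow)) RS0 RS1.
rewrite -gauge1 => /(congr1 (fun c => c k)) /=.
rewrite (vanish_below_lmul (vanish_below_lmul R0pow G1pow) S0ord) //.
rewrite (vanish_below_lmul (vanish_below_dz R0pow) S0ord) // addr0 => /esym.
apply: diag_eq0_of_commutator => //; first exact: laurent_lower_bounded.
by apply: lower_bounded_lmul; exact: laurent_lower_bounded.
Qed.
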